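(* Let $k\ge2$ be an integer and let $\{F_n(k)\}$ be the $k$-bonacci sequence: $F_0(k)=\dots=F_{k-2}(k)=0$, $F_{k-1}(k)=1$, and $F_{n+k}(k)=\sum_{l=0}^{k-1}F_{n+l}(k)$ for $n\ge0$. Then \[ \{F_n(k)\}=\sum_{l=0}^{\infty}(\tilde{\mathcal{I}}_k)^l\, I_0^{\,k-1+l}\{1\}, \] the sum being taken termwise (for each index only finitely many summands are nonzero).
   Context: Sequences are indexed by $n=0,1,2,\dots$; sums are termwise and $\{1\}=1,1,1,\dots$. The insertion operator is $I_0\{a_n\}=0,a_0,a_1,\dots$, $I_0^j$ its $j$-fold application ($I_0^0$ the identity). The left integral is $\mathcal{I}_L^0\{a_n\}=\{\sum_{j=0}^{n-1}a_j\}$ (empty sum $=0$). The deformed integral is the operator $\tilde{\mathcal{I}}_k=\sum_{l=0}^{k-2}I_0^l\,\mathcal{I}_L^0$, and $(\tilde{\mathcal{I}}_k)^l$ its $l$-fold application. *)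

From mathcomp Require Import all_boot.
Set Implicit Arguments. Unset Strict Implicit. Unset Printing Implicit Defensive.

Definition seqN := nat -> nat.

Definition one_seq : seqN := fun _ => 1.

Definition I0 (a : seqN) : seqN := fun n => if n is n'.+1 then a n' else 0.

Definition I0pow (j : nat) (a : seqN) : seqN := iter j I0 a.

Definition IL (a : seqN) : seqN := fun n => \sum_(j < n) a j.

Definition tildeI (k : nat) (a : seqN) : seqN :=
  fun n => \sum_(l < k.-1) I0pow l (IL a) n.

Definition tildeIpow (k l : nat) (a : seqN) : seqN := iter l (tildeI k) a.

Definition kterm (k l : nat) : seqN := tildeIpow k l (I0pow (k - 1 + l) one_seq).

Definition is_kbonacci (k : nat) (F : seqN) : Prop :=
  (forall n, n < k - 1 -> F n = 0) /\ F (k - 1) = 1 /\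
  (forall n, F (n + k) = \sum_(l < k) F (n + l)).

(** The k-bonacci sequence is the fixed point of the map
    [Phi a = I_0^(k-1){1} + tilde I_k (I_0 a)]: summing the recurrence once turns it into
    [F n = [k-1 <= n] + sum_(1 <= l <= k-1) (F_0 + ... + F_(n-l-1))].  The map [Phi] is a
    contraction for the "agree on an initial segment" ultrametric: if [a] and [b] agree below
    [m], then [Phi a] and [Phi b] agree below [m+1].  Since [tilde I_k] is additive and commutes
    with [I_0], the partial sums of the series are the Picard iterates [Phi^m 0], so they agree
    with [F] on ever longer initial segments; and the [l]-th summand vanishes below [k-1+l]. *)
From mathcomp Require Import all_boot zify.
From Stdlib Require Import FunctionalExtensionality.

Set Implicit Arguments. Unset Strict Implicit. Unset Printing Implicit Defensive.

Definition add_seq (a b : seqN) : seqN := fun n => a n + b n.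
Definition zero_seq : seqN := fun _ => 0.

Definition eq_upto (m : nat) (a b : seqN) := forall j, j < m -> a j = b j.

Definition causal (T : seqN -> seqN) :=
  forall m a b, eq_upto m a b -> eq_upto m (T a) (T b).

Definition contraction (Phi : seqN -> seqN) :=
  forall m a b, eq_upto m a b -> eq_upto m.+1 (Phi a) (Phi b).

Definition kbonacci_map (k : nat) (a : seqN) : seqN :=
  add_seq (I0pow (k - 1) one_seq) (tildeI k (I0 a)).

Lemma I0powE l a n : I0pow l a n = if l <= n then a (n - l) else 0.
Proof.
elim: l n => [|l IH] n; first by rewrite subn0.
by case: n => [|n] //; rewrite /I0pow /= -/(I0pow l a) IH.
Qed.

Lemma I0pow0E l a n : a 0 = 0 -> I0pow l a n = a (n - l).
Proof.
move=> a0; rewrite I0powE; case: leqP => // lt_nl.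
by rewrite (eqP (ltnW lt_nl)) in a0 *.
Qed.

Lemma I0pow_I0 l a : I0pow l (I0 a) = I0 (I0pow l a).
Proof. by rewrite /I0pow -iterSr iterS. Qed.

Lemma IL_I0 a : IL (I0 a) = I0 (IL a).
Proof.
apply: functional_extensionality => -[|n]; rewrite /IL ?big_ord0 //=.
by rewrite big_ord_recl add0n.
Qed.

Lemma tildeI_I0 k a : tildeI k (I0 a) = I0 (tildeI k a).
Proof.
apply: functional_extensionality => -[|n]; rewrite /tildeI IL_I0;
  under eq_bigr do rewrite I0pow_I0; last by [].
by rewrite big1.
Qed.

Lemma tildeIpow_I0 k l a : tildeIpow k l (I0 a) = I0 (tildeIpow k l a).
Proof. by elim: l => //= l IH; rewrite /tildeIpow /= -/(tildeIpow k l _) IH tildeI_I0. Qed.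

(* Truncated subtraction is harmless here: [IL a 0 = 0]. *)
Lemma tildeI_I0E k a n : tildeI k (I0 a) n = \sum_(l < k.-1) IL a (n - l.+1).
Proof.
apply: eq_bigr => l _.
rewrite IL_I0 I0pow_I0 -[I0 _]/(I0pow l.+1 (IL a)).
by rewrite I0pow0E // /IL big_ord0.
Qed.

Lemma ktermS k l : kterm k l.+1 = tildeI k (I0 (kterm k l)).
Proof. by rewrite /kterm addnS /= -tildeIpow_I0. Qed.

Lemma I0_add : {morph I0 : a b / add_seq a b}.
Proof. by move=> a b; apply: functional_extensionality => -[|n]. Qed.

Lemma I0pow_add l : {morph I0pow l : a b / add_seq a b}.
Proof. by elim: l => // l IH a b; rewrite /I0pow /= -!/(I0pow l _) IH I0_add. Qed.

Lemma IL_add : {morph IL : a b / add_seq a b}.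
Proof. by move=> a b; apply: functional_extensionality => n; rewrite /IL big_split. Qed.

Lemma tildeI_add k : {morph tildeI k : a b / add_seq a b}.
Proof.
move=> a b; apply: functional_extensionality => n.
by rewrite /tildeI /add_seq IL_add -big_split; apply: eq_bigr => l _; rewrite I0pow_add.
Qed.

Lemma tildeI_0 k : tildeI k zero_seq = zero_seq.
Proof.
apply: functional_extensionality => n; apply: big1 => l _.
by rewrite I0powE /IL big1 ?if_same.
Qed.

Lemma I0_0 : I0 zero_seq = zero_seq.
Proof. by apply: functional_extensionality => -[|n]. Qed.

Lemma eq_upto_I0 m a b : eq_upto m a b -> eq_upto m.+1 (I0 a) (I0 b).
Proof. by move=> eq_ab [|j] //= /eq_ab. Qed.

Lemma eq_uptoW m a b : eq_upto m.+1 a b -> eq_upto m a b.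
Proof. by move=> eq_ab j lt_jm; apply/eq_ab/ltnW. Qed.

Lemma causal_IL : causal IL.
Proof.
move=> m a b eq_ab j lt_jm; apply: eq_bigr => i _.
by apply: eq_ab; apply: ltn_trans lt_jm.
Qed.

Lemma causal_I0pow l : causal (I0pow l).
Proof.
elim: l => // l IH m a b /IH eq_ab; rewrite /I0pow /= -!/(I0pow l _).
exact/eq_uptoW/eq_upto_I0.
Qed.

Lemma causal_tildeI k : causal (tildeI k).
Proof.
move=> m a b /causal_IL eq_ab j lt_jm; apply: eq_bigr => l _.
exact: causal_I0pow eq_ab _ lt_jm.
Qed.

Lemma kbonacci_map_contraction k : contraction (kbonacci_map k).
Proof.
by move=> m a b /eq_upto_I0/causal_tildeI eq_ab j /eq_ab; rewrite /kbonacci_map /add_seq => ->.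
Qed.

Lemma eq_upto_fixpoint_iter (Phi : seqN -> seqN) F a m :
  contraction Phi -> Phi F = F -> eq_upto m F (iter m Phi a).
Proof.
move=> contract fixF; elim: m => [|m IH] //=.
by rewrite -fixF; apply: contract.
Qed.

Lemma tildeIpow_vanish k l m a :
  eq_upto m a zero_seq -> eq_upto m (tildeIpow k l a) zero_seq.
Proof.
move=> a0; elim: l => // l IH.
by rewrite -(tildeI_0 k) /tildeIpow iterS; apply: causal_tildeI.
Qed.

Lemma kterm_vanish k l n : n < k - 1 + l -> kterm k l n = 0.
Proof.
apply: tildeIpow_vanish => j lt_j.
by rewrite I0powE leqNgt lt_j.
Qed.

Lemma sum_seqE m (G : nat -> seqN) :
  (fun n => \sum_(l < m) G l n) = \big[add_seq/zero_seq]_(l < m) G l.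
Proof.
apply: functional_extensionality => n.
by rewrite (big_morph (fun a : seqN => a n) (id1 := 0) (op1 := addn)).
Qed.

Lemma iter_kbonacci_map k m :
  iter m (kbonacci_map k) zero_seq = fun n => \sum_(l < m) kterm k l n.
Proof.
elim: m => [|m IH]; first by rewrite sum_seqE big_ord0.
rewrite iterS IH !sum_seqE big_ord_recl /kbonacci_map.
rewrite (big_morph _ I0_add I0_0) (big_morph _ (tildeI_add k) (tildeI_0 k)).
congr add_seq; last by apply: eq_bigr => l _; rewrite lift0 ktermS.
by rewrite /kterm addn0.
Qed.

Section KBonacci.

Variables (k : nat) (F : seqN).
Hypothesis F_kbonacci : is_kbonacci k.+1 F.

Lemma kbonacci_init n : n <= k -> F n = (k <= n).
Proof.
case: F_kbonacci; rewrite subn1 => F_below [F_k _].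
rewrite leq_eqVlt => /predU1P[-> | lt_nk]; first by rewrite F_k leqnn.
by rewrite F_below // leqNgt lt_nk.
Qed.

Lemma IL_kbonacci_init m : m <= k -> IL F m = 0.
Proof.
move=> le_mk; apply: big1 => i _; have lt_ik := leq_trans (ltn_ord i) le_mk.
rewrite kbonacci_init; last exact: ltnW.
by rewrite leqNgt lt_ik.
Qed.

Lemma kbonacci_succ n : k <= n -> F n.+1 = F n + \sum_(l < k) F (n - l.+1).
Proof.
case: F_kbonacci => _ [_ rec] le_kn.
have := rec (n - k); rewrite addnS subnK // => ->.
rewrite big_ord_recr /= subnK // addnC; congr (_ + _).
rewrite (reindex_inj rev_ord_inj); apply: eq_bigr => l _ /=.
by congr F; have := ltn_ord l; lia.
Qed.

Lemma kbonacci_fixed_point : kbonacci_map k.+1 F = F.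
Proof.
apply: functional_extensionality => n.
rewrite /kbonacci_map /add_seq tildeI_I0E I0powE subn1 /= /one_seq.
change (if k <= n then 1 else 0) with (nat_of_bool (k <= n)).
elim: n => [|n IH].
  by rewrite kbonacci_init // big1 ?addn0 // => l _; rewrite IL_kbonacci_init.
have [le_nk | le_kn] := leqP n.+1 k.
  by rewrite kbonacci_init // big1 ?addn0 // => l _; rewrite IL_kbonacci_init //; lia.
have IL_succ (l : 'I_k) : IL F (n.+1 - l.+1) = IL F (n - l.+1) + F (n - l.+1).
  rewrite subSS (_ : n - l = (n - l.+1).+1); last by have := ltn_ord l; lia.
  by rewrite /IL big_ord_recr.
rewrite kbonacci_succ // -IH (eq_bigr _ (fun l _ => IL_succ l)) big_split /=.
by rewrite -[k <= n]ltnS le_kn (ltnW le_kn) addnA.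
Qed.

End KBonacci.

Theorem mainTheorem17 (k : nat) (hk : 2 <= k) (F : nat -> nat) :
  is_kbonacci k F ->
  forall n : nat, exists N : nat,
    (forall l, N <= l -> kterm k l n = 0) /\
    F n = \sum_(l < N) kterm k l n.
Proof.
case: k hk => // k _ F_kbonacci n; exists n.+1; split.
  by move=> l le_nl; apply: kterm_vanish; lia.
have : eq_upto n.+1 F (iter n.+1 (kbonacci_map k.+1) zero_seq).
  exact: eq_upto_fixpoint_iter (kbonacci_map_contraction _) (kbonacci_fixed_point F_kbonacci).
by rewrite iter_kbonacci_map; apply.
Qed.
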